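(* Let $\sigma,\tau,\theta,\eta\in\mathbb{R}$ and $q\in(-1,1]$. Define $\lambda_0=0$ and $\lambda_{n+1}=\frac{1+q\lambda_n}{1-\sigma\tau\lambda_n}$, assumed well defined with $\lambda_n\neq0$ for all $n\ge1$. For $n\ge0$ define the $2\times2$ matrices $$A_n=\begin{pmatrix}1-\tau\sigma\lambda_n & -\sigma(1+q\lambda_n)\\ -\tau(1+q\lambda_n) & 1-\sigma\tau\lambda_n\end{pmatrix},\quad B_n=\begin{pmatrix}q+\sigma\tau\lambda_n & \sigma(1-\lambda_n)\\ \tau(1-\lambda_n) & q+\sigma\tau\lambda_n\end{pmatrix},\quad C_n=\begin{pmatrix}\sigma\lambda_n & 1\\ 1 & \tau\lambda_n\end{pmatrix},$$ and assume every $A_n$ ($n\ge0$) is non-singular. Put $w_k=A_k^{-1}C_k\begin{pmatrix}\theta\\ \eta\end{pmatrix}$ and $\Xi_k=A_k^{-1}B_k$. Let $(\alpha_n)_{n\ge0},(\beta_n)_{n\ge0},(\gamma_n)_{n\ge0},(\delta_n)_{n\ge0},(\varepsilon_n)_{n\ge1},(\varphi_n)_{n\ge1}$ be real sequences satisfying the system (E1)–(E5) described in the context with $\alpha_0=\gamma_0=\delta_0=\varphi_1=0$, $\beta_0=\varepsilon_1=1$, and such that $(\alpha_n,\beta_n)\neq(0,0)$ for all $n\ge0$ and $(\varepsilon_n,\varphi_n)\neq(0,0)$ for all $n\ge1$. Then for all $n\ge0$, $$\begin{pmatrix}\gamma_{n+1}\\ \delta_{n+1}\end{pmatrix}=\sum_{k=0}^{n}\Big(\prod_{j=k+1}^{n}\Xi_j\Big)w_k,$$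 where the product is ordered $\Xi_n\Xi_{n-1}\cdots\Xi_{k+1}$ and the empty product ($k=n$) is the identity (so $(\gamma_1,\delta_1)^T=w_0$). Moreover, setting $\chi_n=\beta_{n-1}\varepsilon_n$ for $n\ge1$, we have $\chi_1=1$ and for all $n\ge1$ $$\big(q+\sigma\tau-\sigma\tau(1-\lambda_{n-1})^2\big)\chi_n+1+\theta\gamma_n+\tau\gamma_n^2+\eta\delta_n+\sigma\delta_n^2-(1-q)\gamma_n\delta_n=\big(1-\sigma\tau(2\lambda_n+q\lambda_n^2)\big)\chi_{n+1}.$$
   Context: The system (E1)–(E5) is: (E1) for $n\ge0$: $\tau\alpha_n\alpha_{n+1}+q\alpha_n\beta_{n+1}+\sigma\beta_n\beta_{n+1}=\alpha_{n+1}\beta_n$; (E2) for $n\ge2$: $\tau\varepsilon_{n-1}\varepsilon_n+q\varepsilon_n\varphi_{n-1}+\sigma\varphi_n\varphi_{n-1}=\varepsilon_{n-1}\varphi_n$; (E3) for $n\ge0$: $\theta\alpha_n+\eta\beta_n+\tau\alpha_n(\gamma_n+\gamma_{n+1})+\sigma\beta_n(\delta_n+\delta_{n+1})+q(\alpha_n\delta_{n+1}+\beta_n\gamma_n)=\beta_n\gamma_{n+1}+\alpha_n\delta_n$; (E4) for $n\ge1$: $\theta\varepsilon_n+\eta\varphi_n+\tau\varepsilon_n(\gamma_n+\gamma_{n-1})+\sigma\varphi_n(\delta_{n-1}+\delta_n)+q(\varphi_n\gamma_n+\delta_{n-1}\varepsilon_n)=\varepsilon_n\delta_n+\varphi_n\gamma_{n-1}$;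 (E5) for $n\ge1$: $1+\theta\gamma_n+\eta\delta_n+\tau\gamma_n^2+\sigma\delta_n^2+\tau(\alpha_{n-1}\varepsilon_n+\alpha_n\varepsilon_{n+1})+\sigma(\varphi_n\beta_{n-1}+\beta_n\varphi_{n+1})+q(\gamma_n\delta_n+\beta_{n-1}\varepsilon_n+\alpha_n\varphi_{n+1})=\gamma_n\delta_n+\beta_n\varepsilon_{n+1}+\varphi_n\alpha_{n-1}$. *)

From HB Require Import structures.
From mathcomp Require Import all_boot all_order all_algebra.
From mathcomp Require Import reals.
Set Implicit Arguments. Unset Strict Implicit. Unset Printing Implicit Defensive.
Import Order.TTheory GRing.Theory Num.Theory.
Local Open Scope ring_scope.

Section Defs.
Variable R : realType.

Definition mx2 (a b c d : R) : 'M[R]_2 :=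
  \matrix_(i < 2, j < 2)
    if (i == 0 :> nat) then (if (j == 0 :> nat) then a else b)
    else (if (j == 0 :> nat) then c else d).

Definition col2 (x y : R) : 'cV[R]_2 :=
  \col_(i < 2) if (i == 0 :> nat) then x else y.

Fixpoint lam (q s t : R) (n : nat) : R :=
  match n with
  | 0 => 0
  | n'.+1 => (1 + q * lam q s t n') / (1 - s * t * lam q s t n')
  end.

Definition Amx (q s t : R) (n : nat) : 'M[R]_2 :=
  let l := lam q s t n in
  mx2 (1 - t * s * l) (- s * (1 + q * l)) (- t * (1 + q * l)) (1 - s * t * l).

Definition Bmx (q s t : R) (n : nat) : 'M[R]_2 :=
  let l := lam q s t n in
  mx2 (q + s * t * l) (s * (1 - l)) (t * (1 - l)) (q + s * t * l).

Definition Cmx (q s t : R) (n : nat) : 'M[R]_2 :=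
  let l := lam q s t n in
  mx2 (s * l) 1 1 (t * l).

Definition wvec (q s t th et : R) (k : nat) : 'cV[R]_2 :=
  invmx (Amx q s t k) *m Cmx q s t k *m col2 th et.

Definition Xi (q s t : R) (k : nat) : 'M[R]_2 :=
  invmx (Amx q s t k) *m Bmx q s t k.

(* Xi_n Xi_{n-1} ... Xi_{k+1}  (identity if k = n) *)
Definition XiProd (q s t : R) (k n : nat) : 'M[R]_2 :=
  \prod_(j <- rev (iota k.+1 (n - k))) Xi q s t j.

Definition chi (be ep : nat -> R) (n : nat) : R := be n.-1 * ep n.

End Defs.

From HB Require Import structures.
From mathcomp Require Import all_boot all_order all_algebra.
From mathcomp Require Import reals.
From mathcomp Require Import ring.
Set Implicit Arguments. Unset Strict Implicit. Unset Printing Implicit Defensive.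
Import Order.TTheory GRing.Theory Num.Theory.
Local Open Scope ring_scope.

(* Proof idea: (E1) and (E2) propagate the proportionalities
   [alpha_n = sigma lambda_n beta_n] and [phi_n = tau lambda_(n-1) epsilon_n]
   along the recursion defining [lambda], and force [beta_n, epsilon_n <> 0].
   Substituting them, (E3) and (E4) become [beta_n] resp. [epsilon_(n+1)] times
   the two rows of [A_n (gamma,delta)_(n+1) = B_n (gamma,delta)_n + C_n (theta,eta)],
   a first-order affine recursion whose unrolling is the stated sum; and (E5)
   becomes the recursion for [chi]. *)

Section Matrices.
Variable R : realType.

Lemma mx2_col2 (a b c d x y : R) :
  mx2 a b c d *m col2 x y = col2 (a * x + b * y) (c * x + d * y).
Proof.
apply/matrixP => i j; rewrite !mxE !big_ord_recr big_ord0 !mxE /=.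
by case: (i == 0 :> nat); rewrite add0r.
Qed.

Lemma col2D (a b c d : R) : col2 a b + col2 c d = col2 (a + c) (b + d).
Proof. by apply/matrixP => i j; rewrite !mxE; case: (i == 0 :> nat). Qed.

Lemma col20 : col2 (0 : R) 0 = 0.
Proof. by apply/matrixP => i j; rewrite !mxE; case: (i == 0 :> nat). Qed.

Variables q s t : R.

Lemma XiProdnn k : XiProd q s t k k = 1.
Proof. by rewrite /XiProd subnn big_nil. Qed.

Lemma XiProdS k n : (k <= n)%N ->
  XiProd q s t k n.+1 = Xi q s t n.+1 *m XiProd q s t k n.
Proof.
move=> le_kn; rewrite /XiProd subSn // -[(n - k).+1]addn1 iotaD cats1 rev_rcons big_cons.
by rewrite addSn subnKC.
Qed.

Lemma affine_recursion_sum (c w : nat -> 'cV[R]_2) :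
  c 0%N = 0 -> (forall n, c n.+1 = Xi q s t n *m c n + w n) ->
  forall n, c n.+1 = \sum_(k < n.+1) XiProd q s t k n *m w k.
Proof.
move=> c0 cS; elim=> [|n IH].
  by rewrite cS c0 mulmx0 add0r big_ord1 XiProdnn mul1mx.
rewrite cS IH mulmx_sumr [RHS]big_ord_recr /= XiProdnn mul1mx; congr (_ + _).
by apply: eq_bigr => k _; rewrite XiProdS ?mulmxA // -ltnS ltn_ord.
Qed.

End Matrices.

Section Scalars.
Variables (R : realType) (q : R).

Lemma cancel_scaled_diff (b x y u v : R) :
  b != 0 -> u = v -> b * (x - y) = v - u -> x = y.
Proof.
move=> b_neq0 uv bxy; apply/eqP; rewrite -subr_eq0.
by rewrite -(mulrI_eq0 _ (lregP b_neq0)) bxy uv subrr.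
Qed.

Lemma ratio_step (a b l x y x' y' : R) :
  1 - a * b * l != 0 -> y != 0 -> x = a * l * y ->
  b * x * x' + q * x * y' + a * y * y' = x' * y ->
  x' = a * ((1 + q * l) / (1 - a * b * l)) * y'.
Proof.
move=> d_neq0 y_neq0 -> E; apply: (mulfI y_neq0); apply: (mulfI d_neq0).
rewrite [RHS](_ : _ = a * (1 + q * l) * y * y' * ((1 - a * b * l) / (1 - a * b * l)));
  last by ring.
rewrite divff // mulr1.
have -> : a * (1 + q * l) * y * y' = x' * y - b * (a * l * y) * x' by rewrite -E; ring.
ring.
Qed.

Lemma neq0_of_proportional (c x y : R) : x = c * y -> x != 0 \/ y != 0 -> y != 0.
Proof. by move=> -> [|//]; apply: contraNneq => ->; rewrite mulr0. Qed.

End Scalars.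

Section Solutions.
Variables (R : realType) (s t th et q : R) (al be ga de ep ph : nat -> R).
Let l := lam q s t.

Hypothesis hwd : forall n : nat, 1 - s * t * l n != 0.
Hypothesis hA : forall n : nat, Amx q s t n \in unitmx.
Hypothesis E1 : forall n : nat,
  t * al n * al n.+1 + q * al n * be n.+1 + s * be n * be n.+1 = al n.+1 * be n.
Hypothesis E2 : forall n : nat, (2 <= n)%N ->
  t * ep n.-1 * ep n + q * ep n * ph n.-1 + s * ph n * ph n.-1 = ep n.-1 * ph n.
Hypothesis E3 : forall n : nat,
  th * al n + et * be n + t * al n * (ga n + ga n.+1)
  + s * be n * (de n + de n.+1) + q * (al n * de n.+1 + be n * ga n)
  = be n * ga n.+1 + al n * de n.
Hypothesis E4 : forall n : nat, (1 <= n)%N ->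
  th * ep n + et * ph n + t * ep n * (ga n + ga n.-1)
  + s * ph n * (de n.-1 + de n) + q * (ph n * ga n + de n.-1 * ep n)
  = ep n * de n + ph n * ga n.-1.
Hypothesis E5 : forall n : nat, (1 <= n)%N ->
  1 + th * ga n + et * de n + t * ga n ^+ 2 + s * de n ^+ 2
  + t * (al n.-1 * ep n + al n * ep n.+1)
  + s * (ph n * be n.-1 + be n * ph n.+1)
  + q * (ga n * de n + be n.-1 * ep n + al n * ph n.+1)
  = ga n * de n + be n * ep n.+1 + ph n * al n.-1.
Hypotheses (al0 : al 0%N = 0) (be0 : be 0%N = 1) (ph1 : ph 1%N = 0) (ep1 : ep 1%N = 1).
Hypothesis hab : forall n : nat, al n != 0 \/ be n != 0.
Hypothesis hep : forall n : nat, (1 <= n)%N -> ep n != 0 \/ ph n != 0.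

Lemma alpha_proportional n : al n = s * l n * be n /\ be n != 0.
Proof.
elim: n => [|n [alE be_neq0]]; first by rewrite al0 be0 mulr0 mul0r oner_neq0.
have alE' : al n.+1 = s * l n.+1 * be n.+1 by exact: ratio_step (hwd n) be_neq0 alE (E1 n).
by split; last exact: neq0_of_proportional alE' (hab n.+1).
Qed.

Lemma phi_proportional n : (1 <= n)%N -> ph n = t * l n.-1 * ep n /\ ep n != 0.
Proof.
case: n => // n _; elim: n => [|n [phE ep_neq0]]; first by rewrite ph1 ep1 mulr0 mul0r oner_neq0.
have E2' : s * ph n.+1 * ph n.+2 + q * ph n.+1 * ep n.+2 + t * ep n.+1 * ep n.+2
           = ph n.+2 * ep n.+1 by rewrite [RHS]mulrC -(@E2 n.+2) //=; ring.
have d_neq0 : 1 - t * s * l n != 0 by rewrite [t * s]mulrC hwd.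
have phE' : ph n.+2 = t * l n.+1 * ep n.+2.
  by rewrite (ratio_step d_neq0 ep_neq0 phE E2') /l /= [t * s]mulrC.
split=> //; move/or_comm: (@hep n.+2 isT); exact: neq0_of_proportional phE'.
Qed.

Lemma gamma_delta_affine n :
  Amx q s t n *m col2 (ga n.+1) (de n.+1)
  = Bmx q s t n *m col2 (ga n) (de n) + Cmx q s t n *m col2 th et.
Proof.
have [alE be_neq0] := alpha_proportional n.
have [/= phE ep_neq0] := phi_proportional (n := n.+1) isT.
rewrite /Amx /Bmx /Cmx !mx2_col2 col2D -/l; congr col2.
- by apply: (cancel_scaled_diff be_neq0 (E3 n)); rewrite alE; ring.
- by apply: (cancel_scaled_diff ep_neq0 (@E4 n.+1 isT)); rewrite /= phE; ring.
Qed.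

Lemma gamma_delta_step n :
  col2 (ga n.+1) (de n.+1) = Xi q s t n *m col2 (ga n) (de n) + wvec q s t th et n.
Proof. by rewrite /Xi /wvec -!mulmxA -mulmxDr -gamma_delta_affine mulKmx. Qed.

Lemma chi_step n : (1 <= n)%N ->
  (q + s * t - s * t * (1 - l n.-1) ^+ 2) * chi be ep n
  + 1 + th * ga n + t * ga n ^+ 2 + et * de n + s * de n ^+ 2
  - (1 - q) * ga n * de n
  = (1 - s * t * (2 * l n + q * l n ^+ 2)) * chi be ep n.+1.
Proof.
case: n => // m _; have := @E5 m.+1 isT; rewrite /chi /=.
have [alE _] := alpha_proportional m; have [alE' _] := alpha_proportional m.+1.
have [/= phE _] := phi_proportional (n := m.+1) isT.
have [/= phE' _] := phi_proportional (n := m.+2) isT.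
rewrite alE alE' phE phE' => E.
by apply: (cancel_scaled_diff (oner_neq0 R) (esym E)); ring.
Qed.

End Solutions.

Theorem mainTheorem2 (R : realType) (s t th et q : R)
  (al be ga de ep ph : nat -> R)
  (hq : -1 < q <= 1)
  (hwd : forall n : nat, 1 - s * t * lam q s t n != 0)
  (hlam : forall n : nat, (1 <= n)%N -> lam q s t n != 0)
  (hA : forall n : nat, Amx q s t n \in unitmx)
  (E1 : forall n : nat,
     t * al n * al n.+1 + q * al n * be n.+1 + s * be n * be n.+1
     = al n.+1 * be n)
  (E2 : forall n : nat, (2 <= n)%N ->
     t * ep n.-1 * ep n + q * ep n * ph n.-1 + s * ph n * ph n.-1
     = ep n.-1 * ph n)
  (E3 : forall n : nat,
     th * al n + et * be n + t * al n * (ga n + ga n.+1)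
     + s * be n * (de n + de n.+1) + q * (al n * de n.+1 + be n * ga n)
     = be n * ga n.+1 + al n * de n)
  (E4 : forall n : nat, (1 <= n)%N ->
     th * ep n + et * ph n + t * ep n * (ga n + ga n.-1)
     + s * ph n * (de n.-1 + de n) + q * (ph n * ga n + de n.-1 * ep n)
     = ep n * de n + ph n * ga n.-1)
  (E5 : forall n : nat, (1 <= n)%N ->
     1 + th * ga n + et * de n + t * ga n ^+ 2 + s * de n ^+ 2
     + t * (al n.-1 * ep n + al n * ep n.+1)
     + s * (ph n * be n.-1 + be n * ph n.+1)
     + q * (ga n * de n + be n.-1 * ep n + al n * ph n.+1)
     = ga n * de n + be n * ep n.+1 + ph n * al n.-1)
  (h0 : al 0%N = 0 /\ ga 0%N = 0 /\ de 0%N = 0 /\ ph 1%N = 0 /\ be 0%N = 1 /\ ep 1%N = 1)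
  (hab : forall n : nat, al n != 0 \/ be n != 0)
  (hep : forall n : nat, (1 <= n)%N -> ep n != 0 \/ ph n != 0) :
  (forall n : nat,
     col2 (ga n.+1) (de n.+1)
     = \sum_(k < n.+1) (XiProd q s t k n *m wvec q s t th et k)) /\
  chi be ep 1%N = 1 /\
  (forall n : nat, (1 <= n)%N ->
     (q + s * t - s * t * (1 - lam q s t n.-1) ^+ 2) * chi be ep n
     + 1 + th * ga n + t * ga n ^+ 2 + et * de n + s * de n ^+ 2
     - (1 - q) * ga n * de n
     = (1 - s * t * (2 * lam q s t n + q * lam q s t n ^+ 2)) * chi be ep n.+1).
Proof.
case: h0 => al0 [ga0 [de0 [ph1 [be0 ep1]]]].
split.
  apply: (affine_recursion_sum (c := fun n => col2 (ga n) (de n))).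
    by rewrite /= ga0 de0 col20.
  exact: gamma_delta_step hwd hA E1 E2 E3 E4 al0 be0 ph1 ep1 hab hep.
split; first by rewrite /chi /= be0 ep1 mulr1.
exact: chi_step hwd E1 E2 E5 al0 be0 ph1 ep1 hab hep.
Qed.
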